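(* Let $G$ be a graph with vertex set $[n]$. For any Hamiltonian path $\pi\in\mathrm{Ham}(G)$, the number of $G$-friendship parking functions $p$ with $\mathcal{O}_G(p)=\pi$ equals $\prod_{i\in[n]} b(i,\pi,G)$. Consequently $|\mathrm{FPF}(G)|=\sum_{\pi\in\mathrm{Ham}(G)}\prod_{i\in[n]} b(i,\pi,G)$.
   Context: $[n]=\{1,\dots,n\}$, $S_n$ is the set of permutations of $[n]$ in one-line notation $\pi=\pi_1\cdots\pi_n$. Friendship parking process for a graph $G$ on $[n]$ and a parking preference $p\in[n]^n$: cars $1,\dots,n$ enter in order into spots $1,\dots,n$ (initially empty); spot $k$ is available for car $i$ if it is unoccupied when $i$ enters and each of spots $k-1,k+1$ is unoccupied or occupied by a car adjacent to $i$ in $G$ (spots $0,n+1$ count as unoccupied); car $i$ parks in the first available spot $k\ge p_i$, failing otherwise. $\mathrm{FPF}(G)$ is the set of $p$ for which all cars park; for such $p$, $\mathcal{O}_G(p)=\pi\in S_n$ where $\pi_k$ is the car in spot $k$ at the end. $\mathrm{Ham}(G)$ is the set of permutations $\pi\in S_n$ with $\{\pi_k,\pi_{k+1}\}$ an edge of $G$ for all $k\in[n-1]$. Blockers: for $\pi\in\mathrm{Ham}(G)$ and $i\in[n]$, an element $j=\pi_k$ is a blocker for $i$ in $\pi$ if either (1) $j\le i$, or (2) $j>i$ and there is $\ell\in\{\pi_{k-1},\pi_{k+1}\}$ with $\ell<i$ and $\ell$ not adjacent to $i$ in $G$. The blocking sequence $B(i,\pi,G)$ is the longest contiguous block of $\pi$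 ending at $i$ all of whose elements are blockers for $i$; $b(i,\pi,G)$ is its length. *)

(* Cars and spots are 0-indexed: 'I_n stands for [n]
   (car/spot x in the paper is x+1 here; the order is preserved). *)
From mathcomp Require Import all_boot all_fingroup.
Set Implicit Arguments. Unset Strict Implicit. Unset Printing Implicit Defensive.

Section Friendship.
Variable n : nat.
Variable G : rel 'I_n.

(* parking state: spot -> car parked there (if any) *)
Definition state := {ffun 'I_n -> option 'I_n}.
Definition empty_state : state := [ffun=> None].

Definition occ (st : state) (j : nat) : option 'I_n :=
  if insub j is Some k then st k else None.
Definition occ_left (st : state) (k : 'I_n) : option 'I_n :=
  if val k is j.+1 then occ st j else None.
Definition occ_right (st : state) (k : 'I_n) : option 'I_n := occ st (val k).+1.

Definition nbr_ok (i : 'I_n) (o : option 'I_n) : bool :=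
  if o is Some c then G i c else true.

Definition available (st : state) (i k : 'I_n) : bool :=
  [&& st k == None, nbr_ok i (occ_left st k) & nbr_ok i (occ_right st k)].

Definition park (st : state) (i pi : 'I_n) : option state :=
  if [seq k : 'I_n <- enum 'I_n | (pi <= k) && available st i k] is k :: _
  then Some [ffun j => if j == k then Some i else st j]
  else None.

Definition run (p : {ffun 'I_n -> 'I_n}) : option state :=
  foldl (fun ost i => obind (fun st => park st i (p i)) ost)
        (Some empty_state) (enum 'I_n).

Definition FPF : {set {ffun 'I_n -> 'I_n}} := [set p | run p != None].

(* O_G(p) = pi  <->  the final configuration is spot k |-> car pi_k *)
Definition outcome_is (p : {ffun 'I_n -> 'I_n}) (pi : {perm 'I_n}) : bool :=
  run p == Some [ffun k => Some (pi k)].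

Definition Ham : {set {perm 'I_n}} :=
  [set pi : {perm 'I_n} | [forall k : 'I_n, forall k' : 'I_n,
      (k'.+1 == k :> nat) ==> G (pi k') (pi k)]].

Definition pos_entry (pi : {perm 'I_n}) (j : nat) : option 'I_n :=
  if insub j is Some k then Some (pi k) else None.
Definition left_entry (pi : {perm 'I_n}) (k : 'I_n) : option 'I_n :=
  if val k is j.+1 then pos_entry pi j else None.
Definition right_entry (pi : {perm 'I_n}) (k : 'I_n) : option 'I_n :=
  pos_entry pi (val k).+1.

Definition bad_nbr (i : 'I_n) (o : option 'I_n) : bool :=
  if o is Some l then (l < i) && ~~ G l i else false.

Definition blocker (pi : {perm 'I_n}) (i k : 'I_n) : bool :=
  (pi k <= i) ||
  ((i < pi k) && (bad_nbr i (left_entry pi k) || bad_nbr i (right_entry pi k))).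

(* b(i,pi,G): length of the longest contiguous block of pi ending at i
   consisting of blockers for i *)
Definition bnum (pi : {perm 'I_n}) (i : 'I_n) : nat :=
  let q := val ((pi^-1)%g i) in
  \max_(m < q.+2 | [forall k : 'I_n, ((q < k + m) && (k <= q)) ==> blocker pi i k]) m.

End Friendship.

From mathcomp Require Import all_boot all_fingroup zify.
Set Implicit Arguments. Unset Strict Implicit. Unset Printing Implicit Defensive.

(* Cars enter in increasing order, so if the outcome is [pi] then
   just before car [c] enters exactly the cars below [c] occupy their final
   spots.  In that configuration a spot [j] other than the final spot [q] of
   [c] is unavailable to [c] precisely when [pi j] is a blocker for [c], and
   [q] itself is available precisely because consecutive entries of [pi] are
   adjacent.  Hence car [c] lands on [q] iff its preference [x] satisfies
   [x <= q] and every spot from [x] to [q - 1] holds a blocker, i.e. iff [x] is one of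
   the [b(c, pi, G)] positions of the blocking sequence.  The cars' choices are
   independent, which gives the product; every parking function has exactly one
   outcome, and it lies in [Ham G], which gives the sum. *)


Lemma sorted_filter_head (T : eqType) (r : rel T) (P : pred T) s k t :
  transitive r -> irreflexive r -> sorted r s -> filter P s = k :: t ->
  [/\ k \in s, P k & {in s, forall j, r j k -> ~~ P j}].
Proof.
move=> r_trans r_irr s_sorted Ps; have : k \in filter P s by rewrite Ps mem_head.
rewrite mem_filter => /andP[Pk ks]; split=> // j js rjk; apply/negP => Pj.
have : j \in k :: t by rewrite -Ps mem_filter Pj js.
rewrite inE => /predU1P[jk|jt]; first by rewrite jk r_irr in rjk.
have /allP/(_ j jt) rkj : all (r k) t.
  apply: (order_path_min r_trans).
  by rewrite -[path r k t]/(sorted r (k :: t)) -Ps (sorted_filter r_trans).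
by have := r_trans _ _ _ rjk rkj; rewrite r_irr.
Qed.

Lemma sorted_ltn_enum_ord n : sorted (fun i j : 'I_n => i < j) (enum 'I_n).
Proof. by have := iota_ltn_sorted 0 n; rewrite -val_enum_ord sorted_map. Qed.

Lemma card_ord_interval n lo hi :
  hi < n -> #|[pred i : 'I_n | lo <= i <= hi]| = hi.+1 - lo.
Proof.
move=> hi_lt; rewrite -sum1_card.
rewrite (eq_bigl (fun i : 'I_n => (lo <= i) && (i < hi.+1))) => [|i]; last first.
  by rewrite inE ltnS.
rewrite -(@big_ord_widen_cond _ 0 addn _ _ (fun i => lo <= i) (fun _ => 1) hi_lt).
by rewrite -(@big_geq_mkord _ 0 addn lo hi.+1 xpredT (fun _ => 1)) sum_nat_const_nat muln1.
Qed.

Lemma double_count (T U : finType) (R : T -> U -> bool) :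
  \sum_(t : T) #|[set u | R t u]| = \sum_(u : U) #|[set t | R t u]|.
Proof.
have card_sum (V : finType) (P : pred V) : #|[set v | P v]| = \sum_(v | P v) 1.
  by rewrite sum1_card cardsE.
under eq_bigr do rewrite card_sum.
under [RHS]eq_bigr do rewrite card_sum.
exact: exchange_big_dep.
Qed.

Section Parking.
Variables (n : nat) (G : rel 'I_n).

Definition occupy (st : state n) (k c : 'I_n) : state n :=
  [ffun j => if j == k then Some c else st j].

Lemma park_Some (st st' : state n) (c x : 'I_n) :
  park G st c x = Some st' ->
  exists k : 'I_n, [/\ x <= k, available G st c k,
    {in [pred j : 'I_n | x <= j < k], forall j, ~~ available G st c j} &
    st' = occupy st k c].
Proof.
rewrite /park; case E: [seq k <- _ | _] => [|k t] // [<-].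
have [_ /andP[xk avk] before_k] :=
  sorted_filter_head (fun y x z : 'I_n => @ltn_trans y x z) (fun i : 'I_n => ltnn i)
    (sorted_ltn_enum_ord n) E.
exists k; split=> // j /andP[xj jk].
by have := before_k j (mem_enum _ j) jk; rewrite xj.
Qed.

Lemma park_None (st : state n) (c x j : 'I_n) :
  park G st c x = None -> x <= j -> ~~ available G st c j.
Proof.
rewrite /park; case E: [seq k <- _ | _] => // _ xj; apply/negP => avj.
have : j \in [seq k : 'I_n <- enum 'I_n | (x <= k) && available G st c k].
  by rewrite mem_filter xj avj mem_enum.
by rewrite E.
Qed.

Lemma park_first (st : state n) (c x k : 'I_n) :
  x <= k -> available G st c k ->
  {in [pred j : 'I_n | x <= j < k], forall j, ~~ available G st c j} ->
  park G st c x = Some (occupy st k c).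
Proof.
move=> xk avk before_k; case E: (park G st c x) => [st'|]; last first.
  by have := park_None E xk; rewrite avk.
have [k' [xk' avk' before_k' ->]] := park_Some E.
have [kk'|k'k|/val_inj -> //] := ltngtP k k'.
- by have := before_k' k; rewrite inE xk kk' avk => /(_ isT).
- by have := before_k k'; rewrite inE xk' k'k avk' => /(_ isT).
Qed.

Lemma park_occupied (st st' : state n) (c x j : 'I_n) d :
  park G st c x = Some st' -> st j = Some d -> st' j = Some d.
Proof.
move=> /park_Some [k [_ /andP[/eqP stk _] _ ->]] stj.
by rewrite ffunE; case: eqP => // jk; rewrite -jk stj in stk.
Qed.

Definition run_prefix (p : {ffun 'I_n -> 'I_n}) (k : nat) : option (state n) :=
  foldl (fun ost (i : 'I_n) => obind (fun st => park G st i (p i)) ost)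
        (Some (empty_state n)) (take k (enum 'I_n)).

Variable p : {ffun 'I_n -> 'I_n}.

Lemma run_prefix0 : run_prefix p 0 = Some (empty_state n).
Proof. by rewrite /run_prefix take0. Qed.

Lemma run_prefixS (c : 'I_n) :
  run_prefix p c.+1 = obind (fun st => park G st c (p c)) (run_prefix p c).
Proof.
rewrite /run_prefix (take_nth c) ?size_enum_ord //.
by rewrite foldl_rcons nth_ord_enum.
Qed.

Lemma run_prefix_full k : n <= k -> run_prefix p k = run G p.
Proof. by move=> nk; rewrite /run_prefix take_oversize // size_enum_ord. Qed.

Lemma run_prefix_None k m :
  k <= m -> run_prefix p k = None -> run_prefix p m = None.
Proof.
elim: m => [|m IHm]; first by rewrite leqn0 => /eqP ->.
rewrite leq_eqVlt => /predU1P[-> //|km] fail_k.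
have [mn|nm] := ltnP m n; last by rewrite run_prefix_full ?leqW // -(run_prefix_full nm) IHm.
by rewrite -[m]/(val (Ordinal mn)) run_prefixS IHm.
Qed.

Lemma run_prefix_occupied k m st st' j d :
  k <= m -> run_prefix p k = Some st -> run_prefix p m = Some st' ->
  st j = Some d -> st' j = Some d.
Proof.
elim: m st' => [|m IHm] st'; first by rewrite leqn0 => /eqP -> -> [->].
rewrite leq_eqVlt => /predU1P[-> -> [-> //]|km] run_k.
have [mn|nm] := ltnP m n; last first.
  by rewrite run_prefix_full ?leqW // -(run_prefix_full nm); apply: IHm.
rewrite -[m]/(val (Ordinal mn)) run_prefixS.
case run_m: (run_prefix p _) => [st1|] //= park_m stj.
exact: park_occupied park_m (IHm _ km run_k run_m stj).
Qed.

End Parking.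

Section FixedPath.
Variables (n : nat) (G : rel 'I_n) (pi : {perm 'I_n}).

Local Notation spot c := ((pi^-1)%g c).

(* When the outcome is [pi], this is the lot just before car [k] enters. *)
Definition prefix_config (k : nat) : state n :=
  [ffun j => if pi j < k then Some (pi j) else None].

Lemma prefix_config0 : prefix_config 0 = empty_state n.
Proof. by apply/ffunP => j; rewrite !ffunE. Qed.

Lemma prefix_config_full : prefix_config n = [ffun j => Some (pi j)].
Proof. by apply/ffunP => j; rewrite !ffunE ltn_ord. Qed.

Lemma prefix_configS (c : 'I_n) :
  prefix_config c.+1 = occupy (prefix_config c) (spot c) c.
Proof.
apply/ffunP => j; rewrite !ffunE ltnS leq_eqVlt.
have -> : (val (pi j) == val c) = (j == spot c).
  by rewrite (inj_eq val_inj) (can2_eq (permK pi) (permKV pi)).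
by case: eqP => [->|]; rewrite ?permKV.
Qed.

Lemma run_prefix_config (p : {ffun 'I_n -> 'I_n}) :
  (forall c : 'I_n, run_prefix G p c = Some (prefix_config c) ->
     park G (prefix_config c) c (p c) = Some (prefix_config c.+1)) ->
  forall k, k <= n -> run_prefix G p k = Some (prefix_config k).
Proof.
move=> step; elim=> [|k IHk] kn; first by rewrite run_prefix0 prefix_config0.
have run_k := IHk (ltnW kn).
by rewrite -[k]/(val (Ordinal kn)) run_prefixS run_k; apply: step.
Qed.

Lemma outcome_is_park_step (p : {ffun 'I_n -> 'I_n}) :
  outcome_is G p pi ->
  forall c : 'I_n, run_prefix G p c = Some (prefix_config c) ->
  park G (prefix_config c) c (p c) = Some (prefix_config c.+1).
Proof.
move=> /eqP run_p c run_c; have run_n := run_prefix_full G p (leqnn n).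
rewrite run_p in run_n; case park_c: (park G _ c (p c)) => [st|]; last first.
  have /(run_prefix_None (ltn_ord c)) : run_prefix G p c.+1 = None.
    by rewrite run_prefixS run_c.
  by rewrite run_n.
have [k [_ _ _ st_def]] := park_Some park_c.
have run_cS : run_prefix G p c.+1 = Some st by rewrite run_prefixS run_c.
have /(run_prefix_occupied (ltn_ord c) run_cS run_n) : st k = Some c.
  by rewrite st_def ffunE eqxx.
by rewrite ffunE => -[pk]; rewrite prefix_configS st_def -pk permK.
Qed.

Lemma outcome_isP (p : {ffun 'I_n -> 'I_n}) :
  reflect (forall c : 'I_n,
             park G (prefix_config c) c (p c) = Some (prefix_config c.+1))
          (outcome_is G p pi).
Proof.
apply: (iffP idP) => [out_p c | step].
  have run_config := run_prefix_config (outcome_is_park_step out_p).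
  by apply: (outcome_is_park_step out_p); rewrite run_config // ltnW.
apply/eqP; rewrite -(run_prefix_full G p (leqnn n)) run_prefix_config //.
by rewrite prefix_config_full.
Qed.

Lemma pos_entry_ord (k : 'I_n) : pos_entry pi k = Some (pi k).
Proof. by rewrite /pos_entry valK. Qed.

Lemma HamP :
  reflect (forall k k' : 'I_n, k'.+1 = k -> G (pi k') (pi k)) (pi \in Ham G).
Proof.
rewrite inE; apply: (iffP forallP) => [Ham_pi k k' k'k | adj k].
  by have /forallP/(_ k')/implyP := Ham_pi k; apply; rewrite k'k.
by apply/forallP => k'; apply/implyP => /eqP; apply: adj.
Qed.

Lemma park_prefix_config_spot (c x : 'I_n) :
  park G (prefix_config c) c x = Some (prefix_config c.+1) ->
  [/\ x <= spot c, available G (prefix_config c) c (spot c) &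
      {in [pred j : 'I_n | x <= j < spot c],
        forall j, ~~ available G (prefix_config c) c j}].
Proof.
move=> /park_Some [k [xk avk before_k park_c]].
have : prefix_config c.+1 k = Some c by rewrite park_c ffunE eqxx.
rewrite ffunE ltnS; case: ifP => // _ [pk].
have -> : spot c = k by rewrite -pk permK.
by split.
Qed.

Hypothesis Gsym : symmetric G.

Lemma nbr_ok_prefix_config (c : 'I_n) x :
  nbr_ok G c (occ (prefix_config c) x) = ~~ bad_nbr G c (pos_entry pi x).
Proof.
rewrite /occ /pos_entry; case: insub => //= j; rewrite ffunE.
by case: ifP => //= _; rewrite negbK Gsym.
Qed.

Lemma available_prefix_config (c j : 'I_n) :
  available G (prefix_config c) c j =
  [&& c <= pi j, ~~ bad_nbr G c (left_entry pi j)
               & ~~ bad_nbr G c (right_entry pi j)].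
Proof.
rewrite /available ffunE /occ_right /right_entry nbr_ok_prefix_config.
have -> : ((if pi j < c then Some (pi j) else None) == None) = (c <= pi j).
  by case: ltnP.
by rewrite /occ_left /left_entry; case: (val j) => [|i]; rewrite ?nbr_ok_prefix_config.
Qed.

Lemma blocker_unavailable (c j : 'I_n) :
  pi j != c -> blocker G pi c j = ~~ available G (prefix_config c) c j.
Proof.
move=> pj_neq_c; rewrite available_prefix_config /blocker.
have [//|c_lt_pj|/val_inj pj_eq_c] := ltngtP (pi j) c.
  by rewrite /= negb_and !negbK.
by rewrite pj_eq_c eqxx in pj_neq_c.
Qed.

Lemma Ham_available :
  reflect (forall c : 'I_n, available G (prefix_config c) c (spot c)) (pi \in Ham G).
Proof.
apply: (iffP HamP) => [adj c | avail k k' k'k].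
  rewrite available_prefix_config permKV leqnn /=; apply/andP; split.
    rewrite /left_entry; case spot_c: (val (spot c)) => [|i] //.
    have i_lt : i < n by apply: ltnW; rewrite -spot_c ltn_ord.
    have := adj (spot c) (Ordinal i_lt) (esym spot_c); rewrite permKV => G_ic.
    by rewrite -[i]/(val (Ordinal i_lt)) pos_entry_ord /= G_ic andbF.
  rewrite /right_entry /pos_entry; case: insubP => //= k _ kE.
  by have := adj k (spot c) (esym kE); rewrite permKV Gsym => ->; rewrite andbF.
have [lt|gt|/val_inj/perm_inj eq] := ltngtP (pi k') (pi k).
- have := avail (pi k); rewrite available_prefix_config permK => /and3P[_ + _].
  by rewrite /left_entry /= -k'k pos_entry_ord /= lt negbK.
- have := avail (pi k'); rewrite available_prefix_config permK => /and3P[_ _].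
  by rewrite /right_entry k'k pos_entry_ord /= gt negbK Gsym.
- by move: k'k; rewrite eq; lia.
Qed.

Lemma bnum_le (c : 'I_n) : bnum G pi c <= (spot c).+1.
Proof. by apply/bigmax_leqP => m _; rewrite -ltnS ltn_ord. Qed.

Lemma blocker_spot (c : 'I_n) : blocker G pi c (spot c).
Proof. by rewrite /blocker permKV leqnn. Qed.

Lemma bnum_blockers (c : 'I_n) (x : nat) :
  x <= spot c ->
  ((spot c).+1 - bnum G pi c <= x) =
  [forall j : 'I_n, (x <= j < spot c) ==> blocker G pi c j].
Proof.
rewrite /bnum; have := blocker_spot c; move: (spot c) => q blocker_q x_le /=.
set b := \max_(_ < _ | _) _; rewrite leq_subLR.
apply/idP/forallP => [b_large j | all_block].
  apply/implyP => /andP[xj jq]; apply/negPn/negP => not_block.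
  have : b <= q - j.
    apply/bigmax_leqP => m /forallP/(_ j); rewrite (negbTE not_block) implybF.
    move=> /negP m_short; rewrite leqNgt; apply/negP => mj; apply: m_short.
    by rewrite (ltnW jq) andbT; lia.
  by move: b_large xj jq; lia.
have m_lt : q.+1 - x < q.+2 by lia.
suff : Ordinal m_lt <= b by rewrite /=; lia.
apply: (@leq_bigmax_cond _ _ (fun m : 'I_q.+2 => val m) (Ordinal m_lt)).
apply/forallP => k; apply/implyP => /andP[/= k_in]; rewrite leq_eqVlt.
case/predU1P => [/val_inj -> // | k_lt].
by have /implyP := all_block k; apply; rewrite k_lt andbT; lia.
Qed.

Lemma park_prefix_configE (c x : 'I_n) :
  pi \in Ham G ->
  (park G (prefix_config c) c x == Some (prefix_config c.+1)) =
  ((spot c).+1 - bnum G pi c <= x <= spot c).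
Proof.
move=> Ham_pi; apply/eqP/andP => [/park_prefix_config_spot [x_le _ unavail] | [b_x x_le]].
  split=> //; rewrite bnum_blockers //; apply/forallP => j; apply/implyP => j_in.
  rewrite blocker_unavailable ?unavail //.
  by apply/eqP => pj; move: j_in; rewrite -pj permK ltnn andbF.
rewrite prefix_configS; apply: park_first => //; first by have /Ham_available := Ham_pi.
move=> j j_in; rewrite -blocker_unavailable.
  by move: b_x; rewrite bnum_blockers // => /forallP/(_ j)/implyP; apply.
by apply/eqP => pj; move: j_in; rewrite inE -pj permK ltnn andbF.
Qed.

Lemma outcome_is_family (p : {ffun 'I_n -> 'I_n}) :
  pi \in Ham G ->
  outcome_is G p pi =
  (p \in family (fun c => [pred x : 'I_n | (spot c).+1 - bnum G pi c <= x <= spot c])).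
Proof.
move=> Ham_pi; apply/outcome_isP/familyP => [step c | good c].
  by rewrite inE -park_prefix_configE // step.
by apply/eqP; rewrite park_prefix_configE //; apply: good.
Qed.

Lemma card_outcome :
  pi \in Ham G ->
  #|[set p : {ffun 'I_n -> 'I_n} | outcome_is G p pi]| = \prod_(c : 'I_n) bnum G pi c.
Proof.
move=> Ham_pi; rewrite cardsE (eq_card (fun p => outcome_is_family p Ham_pi)).
rewrite card_family foldrE big_map big_enum /=; apply: eq_bigr => c _.
by rewrite card_ord_interval ?ltn_ord // subKn ?bnum_le.
Qed.

Lemma outcome_is_Ham (p : {ffun 'I_n -> 'I_n}) : outcome_is G p pi -> pi \in Ham G.
Proof.
move=> /outcome_isP step; apply/Ham_available => c.
by have [] := park_prefix_config_spot (step c).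
Qed.

End FixedPath.

Section Outcome.
Variables (n : nat) (G : rel 'I_n) (p : {ffun 'I_n -> 'I_n}).

Lemma run_prefix_invariant k st :
  k <= n -> run_prefix G p k = Some st ->
  [/\ forall j d, st j = Some d -> d < k,
      forall j j' d, st j = Some d -> st j' = Some d -> j = j'
    & #|[set j | st j != None]| = k].
Proof.
elim: k st => [|k IHk] st kn.
  rewrite run_prefix0 => -[<-]; split=> [j d|j j' d|]; rewrite ?ffunE //.
  by apply/eqP; rewrite cards_eq0; apply/eqP/setP => j; rewrite !inE ffunE.
rewrite -[k]/(val (Ordinal kn)) run_prefixS.
case run_k: (run_prefix G p _) => [st0|] //= /park_Some [i [_ /andP[/eqP st0i _] _ ->]].
have [cars_lt st0_inj card_st0] := IHk st0 (ltnW kn) run_k.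
split=> [j d|j j' d|].
- by rewrite ffunE; case: eqP => [_ [<-] // | _ /cars_lt /ltnW].
- rewrite !ffunE; case: eqP => [->|_]; case: eqP => [->|_] //; last exact: st0_inj.
    by move=> [<-] /cars_lt; rewrite ltnn.
  by move=> /cars_lt + [d_eq]; rewrite -d_eq ltnn.
have -> : [set j | occupy st0 i (Ordinal kn) j != None] = i |: [set j | st0 j != None].
  by apply/setP => j; rewrite !inE ffunE; case: (j =P i).
by rewrite cardsU1 inE st0i eqxx /= card_st0.
Qed.

Lemma run_Some_outcome st : run G p = Some st -> exists pi : {perm 'I_n}, outcome_is G p pi.
Proof.
move=> run_p; have := run_p; rewrite -(run_prefix_full G p (leqnn n)).
move=> /(run_prefix_invariant (leqnn n)) [_ st_inj card_st].
have st_full j : st j = Some (odflt j (st j)).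
  have : [set j | st j != None] = setT.
    by apply/eqP; rewrite eqEcard subsetT cardsT card_ord card_st leqnn.
  by move/setP/(_ j); rewrite !inE; case: (st j).
have car_inj : injective (fun j => odflt j (st j)).
  by move=> j j' eq_car; apply: (st_inj _ _ _ (st_full j)); rewrite eq_car -st_full.
exists (perm car_inj); rewrite /outcome_is run_p; apply/eqP; congr Some.
by apply/ffunP => j; rewrite ffunE permE -st_full.
Qed.

Lemma outcome_uniq (pi pi' : {perm 'I_n}) :
  outcome_is G p pi -> outcome_is G p pi' -> pi = pi'.
Proof.
rewrite /outcome_is => /eqP -> /eqP [eq_conf]; apply/permP => k.
by have := congr1 (fun st : state n => st k) eq_conf; rewrite !ffunE => -[].
Qed.

Lemma card_outcomes :
  #|[set pi : {perm 'I_n} | outcome_is G p pi]| = (p \in FPF G).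
Proof.
rewrite inE; case run_p: (run G p) => [st|] /=; last first.
  by apply/eqP; rewrite cards_eq0; apply/eqP/setP => pi; rewrite !inE /outcome_is run_p.
have [pi out_pi] := run_Some_outcome run_p.
suff -> : [set pi' | outcome_is G p pi'] = [set pi] by rewrite cards1.
apply/setP => pi'; rewrite !inE.
by apply/idP/eqP => [/(outcome_uniq out_pi) -> | ->].
Qed.

End Outcome.

Theorem corollary2p7 (n : nat) (G : rel 'I_n)
  (Gsym : symmetric G) (Girr : irreflexive G) :
  (forall pi : {perm 'I_n}, pi \in Ham G ->
     #|[set p : {ffun 'I_n -> 'I_n} | outcome_is G p pi]| =
     \prod_(i : 'I_n) bnum G pi i) /\
  #|FPF G| = \sum_(pi in Ham G) \prod_(i : 'I_n) bnum G pi i.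
Proof.
split=> [pi|]; first exact: card_outcome.
transitivity (\sum_(p : {ffun 'I_n -> 'I_n}) #|[set pi : {perm 'I_n} | outcome_is G p pi]|).
  rewrite -sum1_card big_mkcond; apply: eq_bigr => p _.
  by rewrite card_outcomes; case: (p \in FPF G).
rewrite double_count (bigID (fun pi => pi \in Ham G)) /= [X in _ + X]big1 ?addn0 => [|pi not_Ham].
  by apply: eq_bigr => pi Ham_pi; apply: card_outcome.
apply/eqP; rewrite cards_eq0; apply/eqP/setP => p; rewrite !inE.
by apply/negP => /(outcome_is_Ham Gsym) Ham_pi; rewrite Ham_pi in not_Ham.
Qed.
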